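(* Let $\beta\in\mathbb C$ and $m\ge0$. If $\beta$ is reproducible of order $m$ in $\mathcal H$, then $\beta$ is reproducible of order $j$ for every integer $0\le j\le m$.
   Context: Standing assumptions: $\Omega\subset\mathbb C$ is a domain with $0\in\Omega$, and $\mathcal H$ is a Hilbert space of analytic functions on $\Omega$ in which every point evaluation at points of $\Omega$ is bounded; the shift $(Sf)(z)=zf(z)$ is bounded on $\mathcal H$; and the polynomials $\mathcal P$ are dense in $\mathcal H$. A point $\beta\in\mathbb C$ (not necessarily in $\Omega$) is reproducible of order $m\ge0$ in $\mathcal H$ if the linear functional $p\mapsto p^{(m)}(\beta)$ on $\mathcal P$ extends to a bounded linear functional on $\mathcal H$. *)

(* The complex numbers are R[i]
   (mathcomp-real-closed `complex`) for an arbitrary R : realType;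
   R[i]^o is R[i] seen as a normed module (hence topological space) over
   itself, so `derivable f z 1` is complex differentiability. *)
From HB Require Import structures.
From mathcomp Require Import all_boot all_order all_algebra.
From mathcomp Require Import complex.
From mathcomp Require Import all_classical all_reals all_analysis.
Import Order.TTheory GRing.Theory Num.Theory.
Import numFieldNormedType.Exports.

Set Implicit Arguments.
Unset Strict Implicit.
Unset Printing Implicit Defensive.

Local Open Scope ring_scope.
Local Open Scope classical_set_scope.

Definition is_domain (R : realType) (Omega : set R[i]^o) : Prop :=
  [/\ open Omega, connected Omega & Omega !=set0].

(* Together with completeness of V this makes V a complex Hilbert space. *)
Definition is_inner_product (R : realType) (V : normedModType R[i])
  (ip : V -> V -> R[i]) : Prop :=
  [/\ (forall u v w, ip (u + v) w = ip u w + ip v w),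
      (forall (a : R[i]) u v, ip (a *: u) v = a * ip u v),
      (forall u v, ip v u = (ip u v)^*)
    & (forall u, (`|u| : R[i]) ^+ 2 = ip u u)].

(* The Hilbert space H is modelled by a complete
   normed space V with inner product ip, together with the map ev which
   realises each element of V as a function on Omega; ev is linear and
   injective (as functions on Omega), so V is identified with a linear space
   of functions on Omega with pointwise operations. *)
Record analytic_hilbert_space (R : realType) (Omega : set R[i]^o)
  (V : completeNormedModType R[i]) (ip : V -> V -> R[i])
  (ev : V -> R[i]^o -> R[i]^o) : Prop := {
  ahs_domain : is_domain Omega;
  ahs_zero : Omega 0;
  ahs_inner : is_inner_product ip;
  ahs_add : forall u v z, Omega z -> ev (u + v) z = ev u z + ev v z;
  ahs_scale : forall (a : R[i]) v z, Omega z -> ev (a *: v) z = a * ev v z;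
  ahs_inj : forall u v, (forall z, Omega z -> ev u z = ev v z) -> u = v;
  ahs_analytic : forall v z, Omega z -> derivable (ev v) z 1;
  ahs_eval_bounded : forall z, Omega z ->
      exists M : R[i], forall v, `|ev v z| <= M * `|v|;
  ahs_shift : exists S : V -> V,
      (forall v z, Omega z -> ev (S v) z = z * ev v z) /\
      (exists M : R[i], forall v, `|S v| <= M * `|v|);
  ahs_poly : forall p : {poly R[i]}, exists v, forall z, Omega z -> ev v z = p.[z];
  ahs_dense : forall (v : V) (eps : R[i]), 0 < eps ->
      exists (p : {poly R[i]}) (w : V),
        (forall z, Omega z -> ev w z = p.[z]) /\ `|v - w| < eps
}.

Definition reproducible (R : realType) (Omega : set R[i]^o)
  (V : completeNormedModType R[i]) (ev : V -> R[i]^o -> R[i]^o)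
  (beta : R[i]) (m : nat) : Prop :=
  exists L : V -> R[i],
    [/\ (forall u v, L (u + v) = L u + L v),
        (forall (a : R[i]) v, L (a *: v) = a * L v),
        (exists M : R[i], forall v, `|L v| <= M * `|v|)
      & (forall (p : {poly R[i]}) (v : V),
           (forall z, Omega z -> ev v z = p.[z]) -> L v = (p^`(m)).[beta])].

From HB Require Import structures.
From mathcomp Require Import all_boot all_order all_algebra.
From mathcomp Require Import complex ring.
From mathcomp Require Import all_classical all_reals all_analysis.
Import Order.TTheory GRing.Theory Num.Theory.
Import numFieldNormedType.Exports.
Set Implicit Arguments.
Unset Strict Implicit.
Unset Printing Implicit Defensive.

Local Open Scope ring_scope.

(* Let L extend p |-> p^(m+1)(beta) boundedly and let S be the
   (bounded) shift.  Leibniz' rule gives, for every polynomial p,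
       (X p)^(m+1)(beta) = beta * p^(m+1)(beta) + (m+1) * p^(m)(beta),
   so the functional  v |-> (L (S v) - beta * L v) / (m+1)  is bounded,
   linear, and equals p |-> p^(m)(beta) on the polynomials: beta is
   reproducible of order m.  Iterating this descent step from m down to j
   proves the theorem. *)

Lemma horner_derivn_mulX (F : comNzRingType) (p : {poly F}) (m : nat)
    (x : F) :
  (p * 'X)^`(m.+1).[x] = x * p^`(m.+1).[x] + m.+1%:R * p^`(m).[x].
Proof.
have := derivnMXaddC m p 0; rewrite addr0 => ->.
by rewrite hornerD hornerMn hornerMX mulrC mulr_natl addrC.
Qed.

Lemma ler_normr_bound (K : numDomainType) (a b M : K) :
  0 <= a -> 0 <= b -> a <= M * b -> a <= `|M| * b.
Proof.
move=> a_ge0 b_ge0 aMb; have Mb_ge0 : 0 <= M * b := le_trans a_ge0 aMb.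
by rewrite -(ger0_norm b_ge0) -normrM ger0_norm // ger0_norm.
Qed.

Section Descent.
Variables (R : realType) (Omega : set R[i]^o) (V : completeNormedModType R[i]).
Variables (ip : V -> V -> R[i]) (ev : V -> R[i]^o -> R[i]^o).
Hypothesis HH : analytic_hilbert_space Omega ip ev.

(* Since elements of H are determined by their values on Omega, any map
   realising the shift pointwise is automatically linear. *)
Lemma shift_linear (S : V -> V) :
  (forall v z, Omega z -> ev (S v) z = z * ev v z) ->
  (forall u v, S (u + v) = S u + S v) /\
  (forall (a : R[i]) v, S (a *: v) = a *: S v).
Proof.
move=> HS; split=> [u v | a v]; apply: (ahs_inj HH) => z Oz.
- by rewrite HS // !(ahs_add HH) // !HS // mulrDr.
- by rewrite HS // !(ahs_scale HH) // HS // mulrCA.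
Qed.

Lemma reproducible_pred (beta : R[i]) (m : nat) :
  reproducible Omega ev beta m.+1 -> reproducible Omega ev beta m.
Proof.
case=> L [LD LZ [M LM] LP].
have {}LM v : `|L v| <= `|M| * `|v|.
  exact: ler_normr_bound (LM v).
have [S [HS [MS SM]]] := ahs_shift HH.
have {}SM v : `|S v| <= `|MS| * `|v|.
  exact: ler_normr_bound (SM v).
have [SD SZ] := shift_linear HS.
have m1_neq0 : (1 + m%:R : R[i]) != 0 by rewrite nat1r pnatr_eq0.
exists (fun v => (L (S v) - beta * L v) / m.+1%:R); split.
- by move=> u v; rewrite SD !LD; field.
- by move=> a v; rewrite SZ !LZ; field.
- exists ((`|M| * `|MS| + `|beta| * `|M|) / m.+1%:R) => v.
  rewrite normrM normfV normr_nat [X in _ <= X]mulrAC.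
  rewrite ler_pM2r ?invr_gt0 ?ltr0n // mulrDl.
  apply: (le_trans (ler_normB _ _)); apply: lerD.
    by apply: (le_trans (LM _)); rewrite -mulrA ler_wpM2l.
  by rewrite normrM -mulrA ler_wpM2l.
- move=> p v Hv.
  have HSv : forall z, Omega z -> ev (S v) z = (p * 'X).[z].
    by move=> z Oz; rewrite HS // Hv // hornerMX mulrC.
  rewrite (LP _ _ HSv) (LP _ _ Hv) horner_derivn_mulX -mulr_natr.
  by field.
Qed.

End Descent.

Theorem mainTheorem3 (R : realType) (Omega : set R[i]^o)
  (V : completeNormedModType R[i]) (ip : V -> V -> R[i])
  (ev : V -> R[i]^o -> R[i]^o)
  (HH : analytic_hilbert_space Omega ip ev)
  (beta : R[i]) (m : nat) :
  reproducible Omega ev beta m ->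
  forall j : nat, (j <= m)%N -> reproducible Omega ev beta j.
Proof.
elim: m => [|m IH] rep_m j le_jm.
  by move: le_jm; rewrite leqn0 => /eqP ->.
have [lt_jm | ge_jm] := ltnP j m.+1.
  exact: IH (reproducible_pred HH rep_m) j lt_jm.
by have -> : j = m.+1 by apply/eqP; rewrite eqn_leq le_jm ge_jm.
Qed.
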